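(* Let $X$ be a metric space. The following are equivalent: (1) $X$ is hereditarily Baire; (2) every Borel 1 function $f\colon X\to\mathbb R$ has (PCP).
   Context: A topological space is Baire if every nonempty open subset of it is nonmeager in it; it is hereditarily Baire if every nonempty closed subspace is Baire. $f\colon X\to\mathbb R$ is Borel 1 if $f^{-1}(V)$ is $F_\sigma$ for every open $V\subseteq\mathbb R$; it has (PCP) if for every nonempty closed $F\subseteq X$ the restriction $f|_F$ has a point of continuity. *)

From HB Require Import structures.
From mathcomp Require Import all_boot all_order all_algebra.
From mathcomp Require Import all_classical all_reals all_analysis borel_hierarchy.
Set Implicit Arguments. Unset Strict Implicit. Unset Printing Implicit Defensive.
Import Order.TTheory GRing.Theory Num.Theory.
Import numFieldNormedType.Exports.
Local Open Scope classical_set_scope.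

Definition nowhere_dense (T : topologicalType) (A : set T) : Prop :=
  (closure A)° = set0.

Definition meager (T : topologicalType) (A : set T) : Prop :=
  exists2 N : (set T)^nat, (forall n, nowhere_dense (N n)) & A `<=` \bigcup_n N n.

Definition Baire_space (T : topologicalType) : Prop :=
  forall U : set T, open U -> U !=set0 -> ~ meager U.

Definition hereditarily_Baire (T : topologicalType) : Prop :=
  forall F : set T, closed F -> F !=set0 -> Baire_space (set_type F).

Definition Borel1 (T : topologicalType) (R : realType) (f : T -> R) : Prop :=
  forall V : set R, open V -> Fsigma (f @^-1` V).

Definition PCP (T : topologicalType) (R : realType) (f : T -> R) : Prop :=
  forall F : set T, closed F -> F !=set0 ->
    exists x : set_type F, {for x, continuous (fun y : set_type F => f (set_val y))}.

(* (1) -> (2): if the preimages of the rational intervals under a Borel 1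
   function g are F_sigma, then each of them differs from its interior by a
   meager set; on a Baire space some point lies in the interior of every such
   preimage containing it, and g is continuous there.  Apply this to g
   restricted to each nonempty closed subspace.
   (2) -> (1): suppose the nonempty relatively open set W /\ F of a closed F is
   covered by sets N_0, N_1, ... nowhere dense in F.  Let G be the closure of
   W /\ F and cover G by the closed sets G \ W, G /\ cl N_0, G /\ cl N_1, ...;
   put f = 2^-n on the points whose first covering set is the n-th one, and
   f = 0 off G.  Open sets of a metric space are F_sigma, so f is Borel 1.
   But near any point of G there are points of W /\ F outside cl N_0, ...,
   cl N_k for every k, where f is at most 2^-(k+2): f restricted to G has no
   point of continuity. *)

From HB Require Import structures.
From mathcomp Require Import all_boot all_order all_algebra.
From mathcomp Require Import all_classical all_reals all_analysis borel_hierarchy.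
From mathcomp Require Import lra.
Import Order.TTheory GRing.Theory Num.Theory.
Import numFieldNormedType.Exports.
Local Open Scope classical_set_scope.
Local Open Scope ring_scope.

Section Fsigma_sets.
Context {T : topologicalType}.

Lemma Fsigma0 : Fsigma (@set0 T).
Proof. exact/closed_Fsigma/closed0. Qed.

Lemma Fsigma_bigcup (I : countType) (A : I -> set T) :
  (forall i, Fsigma (A i)) -> Fsigma (\bigcup_i A i).
Proof.
move=> FA.
have /choice[K hK] : forall i, exists K : (set T)^nat,
    (forall n, closed (K n)) /\ A i = \bigcup_n K n.
  by move=> i; case: (FA i) => K ? ?; exists K.
exists (fun k => if @unpickle (I * nat)%type k is Some (i, n) then K i n else set0).
  by move=> k; case: unpickle => [[i n]|]; [exact: (hK i).1 | exact: closed0].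
apply/seteqP; split=> [x [i _]|x [k _]].
  by rewrite (hK i).2 => -[n _ Kx]; exists (pickle (i, n)); rewrite ?pickleK.
by case: unpickle => [[i n]|] // Kx; exists i => //; rewrite (hK i).2; exists n.
Qed.

Lemma Fsigma_closedI (C A : set T) : closed C -> Fsigma A -> Fsigma (C `&` A).
Proof.
move=> cC [K cK ->]; exists (fun n => C `&` K n); last by rewrite setI_bigcupr.
by move=> n; exact: closedI.
Qed.

Lemma Fsigma_preimage {S : topologicalType} (g : S -> T) (A : set T) :
  continuous g -> Fsigma A -> Fsigma (g @^-1` A).
Proof.
move=> cg [K cK ->]; exists (fun n => g @^-1` K n); last exact: preimage_bigcup.
by move=> n; exact: (continuous_closedP g).1.
Qed.

End Fsigma_sets.

Lemma open_Fsigma (R : realType) (X : pseudoMetricType R) (U : set X) :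
  open U -> Fsigma U.
Proof.
move=> oU.
pose A (n : nat) := [set x : X | ball x n.+1%:R^-1 `<=` U].
exists (fun n => closure (A n)); first by move=> n; exact: closed_closure.
apply/seteqP; split=> [x Ux|y [n _ cly]].
  have : nbhs x U by move: oU; rewrite openE => /(_ _ Ux).
  rewrite nbhs_ballP => -[e e0 be].
  exists (Num.truncn e^-1) => //; apply: subset_closure => y /= bxy.
  apply/be/(le_ball _ bxy)/ltW.
  by rewrite invf_plt ?posrE // truncnS_gt.
have [z [Az bz]] := cly _ (nbhsx_ballx y n.+1%:R^-1 ltac:(by [])).
exact/Az/ball_sym.
Qed.

Lemma Borel1_piecewise_constant (R : realType) (T : topologicalType)
    (f : T -> R) (P : (set T)^nat) (c : R^nat) :
  (forall n, Fsigma (P n)) -> (forall n x, P n x -> f x = c n) ->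
  (forall x, exists n, P n x) -> Borel1 f.
Proof.
move=> FP fP Pcover V _.
have -> : f @^-1` V = \bigcup_(n in [set n | V (c n)]) P n.
  apply/seteqP; split=> [x Vfx|x [n Vc Pnx]]; last by rewrite /= (fP _ _ Pnx).
  by have [n Pnx] := Pcover x; exists n; rewrite //= -(fP _ _ Pnx).
rewrite bigcup_mkcond; apply: Fsigma_bigcup => n.
by case: ifP => _; [exact: FP | exact: Fsigma0].
Qed.

Section meager_sets.
Context {T : topologicalType}.

Lemma nowhere_dense_closed_boundary (C : set T) :
  closed C -> nowhere_dense (C `\` C°).
Proof.
move=> cC; apply/seteqP; split=> // x clx.
have sC : closure (C `\` C°) `<=` C.
  by rewrite [X in _ `<=` X](closure_id C).1 //; apply: closureS => y [].
have /(interior_subset clx) [y [[_ nCy] Cy]] : nbhs x C°.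
  exact/nbhs_interior/(interiorS sC).
exact: nCy.
Qed.

Lemma nowhere_dense_open_setD (O N : set T) :
  open O -> O !=set0 -> nowhere_dense N -> (O `\` closure N) !=set0.
Proof.
move=> oO [x Ox] nN; apply: contrapT => nO.
have sO : O `<=` closure N.
  by move=> y Oy; apply: contrapT => nNy; apply: nO; exists y.
by have := interiorS sO; rewrite nN (interior_id O).1 // => /(_ x Ox).
Qed.

Lemma open_avoids_nowhere_dense (N : (set T)^nat) (V : set T) :
  (forall n, nowhere_dense (N n)) -> open V -> V !=set0 ->
  forall k, exists2 x, V x & forall i, (i < k)%N -> ~ closure (N i) x.
Proof.
move=> nN + + k; elim: k V => [V _ [x Vx]|k IH V oV V0]; first by exists x.
have oV' : open (V `\` closure (N k)).
  by apply: openI oV _; rewrite openC; exact: closed_closure.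
have [x [Vx nNx] hx] := IH _ oV' (nowhere_dense_open_setD _ _ oV V0 (nN k)).
by exists x => // i; rewrite ltnS leq_eqVlt => /orP[/eqP ->|/hx].
Qed.

Lemma meager_Fsigma_boundary (A : set T) : Fsigma A -> meager (A `\` A°).
Proof.
case=> K cK ->; exists (fun n => K n `\` (K n)°).
  by move=> n; exact: nowhere_dense_closed_boundary.
move=> x [[n _ Kx] nAx]; exists n => //; split => // Kx_int; apply: nAx.
by apply: interiorS Kx_int; exact: bigcup_sup.
Qed.

Lemma meager_bigcup (I : countType) (A : I -> set T) :
  (forall i, meager (A i)) -> meager (\bigcup_i A i).
Proof.
move=> mA.
have /choice[N hN] : forall i, exists N : (set T)^nat,
    (forall n, nowhere_dense (N n)) /\ A i `<=` \bigcup_n N n.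
  by move=> i; case: (mA i) => N ? ?; exists N.
exists (fun k => if @unpickle (I * nat)%type k is Some (i, n) then N i n else set0).
  move=> k; case: unpickle => [[i n]|]; first exact: (hN i).1.
  by rewrite /nowhere_dense closure0 interior0.
move=> x [i _ /(hN i).2 [n _ Nx]].
by exists (pickle (i, n)); rewrite ?pickleK.
Qed.

End meager_sets.

Lemma Baire_Borel1_continuity_point (R : realType) (T : topologicalType)
    (g : T -> R) :
  Baire_space T -> [set: T] !=set0 -> Borel1 g -> exists x, {for x, continuous g}.
Proof.
move=> hB T0 bg.
pose A (ab : rat * rat) := g @^-1` `]ratr ab.1, ratr ab.2[%classic.
have mA : meager (\bigcup_ab (A ab `\` (A ab)°)).
  by apply: meager_bigcup => ab; exact/meager_Fsigma_boundary/bg/interval_open.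
have [x nAx] : exists x, ~ (\bigcup_ab (A ab `\` (A ab)°)) x.
  apply: contrapT => allA; apply: (hB _ openT T0).
  case: mA => N nN sN; exists N => // y _; apply: sN.
  by apply: contrapT => nAy; apply: allA; exists y.
exists x; apply/cvgrPdist_lt => e e0.
have [a] := @rat_in_itvoo R (g x - e) (g x) ltac:(lra).
have [b] := @rat_in_itvoo R (g x) (g x + e) ltac:(lra).
rewrite !in_itv /= => /andP[xb be] /andP[ea ax].
have Ax : A (a, b) x by rewrite /A /= in_itv /= ax xb.
have : (A (a, b))° x by apply: contrapT => nAx_int; apply: nAx; exists (a, b).
apply: filterS => y; rewrite /A /= in_itv /= => /andP[ay yb].
by rewrite ltr_norml; apply/andP; split; lra.
Qed.

Section subspace.
Context {T : topologicalType} {F : set T}.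

Lemma nbhs_set_valP {x : set_type F} {Q : set (set_type F)} : nbhs x Q ->
  exists W : set T, [/\ open W, W (set_val x) & set_val @^-1` W `<=` Q].
Proof.
rewrite nbhsE => -[V [[W oW <-] Wx VQ]].
by exists W.
Qed.

Lemma closure_set_val_image (A : set (set_type F)) (x : set_type F) :
  closure (set_val @` A) (set_val x) -> closure A x.
Proof.
move=> clx Q /nbhs_set_valP [W [oW Wx sWQ]].
have [_ [[a Aa <-] Wa]] := clx W (open_nbhs_nbhs (conj oW Wx)).
by exists a; split => //; exact: sWQ.
Qed.

End subspace.

Lemma hereditarily_Baire_PCP (R : realType) (T : topologicalType) (f : T -> R) :
  hereditarily_Baire T -> Borel1 f -> PCP f.
Proof.
move=> hB bf F cF [x Fx].
have F0 : [set: set_type F] !=set0 by exists (exist _ x (mem_set Fx)).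
apply: Baire_Borel1_continuity_point F0 _; first by apply: hB => //; exists x.
move=> V oV; apply: Fsigma_preimage (bf V oV).
exact: initial_continuous.
Qed.

Section meager_open_subspace.
Context (R : realType) (T : topologicalType).
Hypothesis open_sets_Fsigma : forall A : set T, open A -> Fsigma A.
Variables (F W : set T) (N : (set (set_type F))^nat).
Hypotheses (cF : closed F) (oW : open W) (WF0 : (W `&` F) !=set0)
  (nN : forall n, nowhere_dense (N n))
  (WN : set_val @^-1` W `<=` \bigcup_n N n).

Let G : set T := closure (W `&` F).

Let piece (n : nat) : set T :=
  if n is m.+1 then G `&` closure (set_val @` N m) else G `\` W.

Let layer (n : nat) : set T := piece n `\` \bigcup_(i in `I_n) piece i.

Let f (x : T) : R :=
  if `[< G x >] then (2^-1) ^+ xget 0%N [set n | layer n x] else 0.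

Let G_sub_F {x} : G x -> F x.
Proof.
by move=> Gx; rewrite (closure_id F).1 //; exact: closureS (@subIsetr _ W F) _ Gx.
Qed.

Let closed_piece n : closed (piece n).
Proof.
case: n => [|m] /=; rewrite ?setDE; apply: closedI; try exact: closed_closure.
by rewrite closedC.
Qed.

Let piece_sub_G {n x} : piece n x -> G x.
Proof. by case: n => [|m] []. Qed.

Let G_piece_cover {x} : G x -> exists n, piece n x.
Proof.
move=> Gx; have [Wx|nWx] := pselect (W x); last by exists 0%N.
have [m _ Nx] := WN (exist _ x (mem_set (G_sub_F Gx)) : set_type F) Wx.
by exists m.+1; split => //; apply: subset_closure; eexists; first exact: Nx.
Qed.

Let G_layer {x} : G x -> exists n, layer n x.
Proof.
move=> /G_piece_cover [k pkx].
have ex : exists n, `[< piece n x >] by exists k; exact/asboolP.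
case: (ex_minnP ex) => n /asboolP pnx minn; exists n; split => // -[i /= ilt pix].
by have := minn i (asboolT pix); rewrite leqNgt ilt.
Qed.

Let layer_uniq {m n x} : layer m x -> layer n x -> m = n.
Proof.
move=> [pmx nm] [pnx nn]; case: (ltngtP m n) => // [mn|nm'].
  by case: nn; exists m.
by case: nm; exists n.
Qed.

Let f_layer {n x} : layer n x -> f x = (2^-1) ^+ n.
Proof.
move=> Lnx; have Gx : G x := piece_sub_G Lnx.1.
rewrite /f asboolT //.
by rewrite (@xget_unique _ 0%N [set m | layer m x] n Lnx) // => m /layer_uniq; exact.
Qed.

Let Borel1_f : Borel1 f.
Proof.
apply: (@Borel1_piecewise_constant _ _ f
  (fun n => if n is m.+1 then layer m else ~` G)
  (fun n => if n is m.+1 then (2^-1) ^+ m else 0)).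
- case=> [|m]; first by apply: open_sets_Fsigma; rewrite openC; exact: closed_closure.
  apply: Fsigma_closedI => //; apply: open_sets_Fsigma; rewrite openC.
  by apply: closed_bigcup => [|i _]; [exact: finite_II | exact: closed_piece].
- by case=> [|m] x; [move=> nGx; rewrite /f asboolF | exact: f_layer].
- move=> x; have [/G_layer [n Lnx]|nGx] := pselect (G x); last by exists 0%N.
  by exists n.+1.
Qed.

Let G_escape {x B} : G x -> open B -> B x -> forall k,
  exists y, [/\ G y, B y & forall i, (i <= k)%N -> ~ piece i y].
Proof.
move=> Gx oB Bx k.
have [z [[Wz Fz] Bz]] := Gx B (open_nbhs_nbhs (conj oB Bx)).
pose V : set (set_type F) := set_val @^-1` (B `&` W).
have oV : open V by exists (B `&` W) => //; exact: openI.
have V0 : V !=set0 by exists (exist _ z (mem_set Fz)).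
have [s [Bs Ws] sN] := open_avoids_nowhere_dense _ _ nN oV V0 k.
exists (set_val s); split => //.
- by apply: subset_closure; split => //; exact: set_valP.
- case=> [_ [] //|i ik [_ /closure_set_val_image]]; exact: sN.
Qed.

Let f_discontinuous (x : set_type G) :
  ~ {for x, continuous (fun y : set_type G => f (set_val y))}.
Proof.
move=> /cvgrPdist_lt fx; have [n Lnx] := G_layer (set_valP x).
have e0 : (0 : R) < (2^-1) ^+ n.+1 by rewrite exprn_gt0 // invr_gt0.
have [B [oB Bx sB]] := nbhs_set_valP (fx _ e0).
have [y [Gy By ny]] := G_escape (set_valP x) oB Bx n.
have [m Lmy] := G_layer Gy.
have nm : (n < m)%N by rewrite ltnNge; apply/negP => mn; exact: ny _ mn Lmy.1.
have := sB (exist _ y (mem_set Gy)) By; rewrite /= (f_layer Lnx) (f_layer Lmy).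
have : (2^-1 : R) ^+ m <= (2^-1) ^+ n.+1.
  by apply: ler_wiXn2l => //; rewrite ?invr_ge0 ?invf_le1 ?ler1n.
have : (0 : R) < (2^-1) ^+ n by rewrite exprn_gt0 // invr_gt0.
rewrite exprS; move: ((2^-1 : R) ^+ n) ((2^-1 : R) ^+ m) => a b a0 ba ab.
by have := ler_norm (a - b); lra.
Qed.

Lemma exists_Borel1_not_PCP : exists f : T -> R, Borel1 f /\ ~ PCP f.
Proof.
exists f; split => [|PCPf]; first exact: Borel1_f.
have [x [Wx Fx]] := WF0.
have [|y] := PCPf G (@closed_closure _ _); last exact: f_discontinuous.
by exists x; exact: subset_closure.
Qed.

End meager_open_subspace.

Lemma PCP_hereditarily_Baire (R : realType) (T : topologicalType) :
  (forall A : set T, open A -> Fsigma A) ->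
  (forall f : T -> R, Borel1 f -> PCP f) -> hereditarily_Baire T.
Proof.
move=> open_Fs PCPf F cF _ U [W oW <-] [[x Fx] /= Wx] [N nN WN].
have WF0 : (W `&` F) !=set0 by exists x; split => //; exact/set_mem.
have [f [bf nf]] := @exists_Borel1_not_PCP R _ open_Fs _ _ _ cF oW WF0 nN WN.
exact/nf/PCPf.
Qed.

Theorem corollary2p10 (R : realType) (X : pseudoMetricType R)
  (HX : hausdorff_space X) :
  hereditarily_Baire X <-> (forall f : X -> R, Borel1 f -> PCP f).
Proof.
split=> [hB f|]; first exact: hereditarily_Baire_PCP.
exact/PCP_hereditarily_Baire/open_Fsigma.
Qed.
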